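(* Let $\psi:R\to R^*$ be a $G_0$-equivariant isomorphism; it is either symmetric ($\psi(r)(t)=\psi(t)(r)$) or alternating ($\psi(r)(t)=-\psi(t)(r)$). For \[M=\begin{pmatrix}\mathsf A&\mathsf B\\ \mathsf K&\mathsf D\end{pmatrix}\in\mathrm{End}(H\oplus H^* )\] (with $\mathsf A:H\to H$, $\mathsf B:H^*\to H$, $\mathsf K:H\to H^*$, $\mathsf D:H^*\to H^*$), let $\Phi(M)$ be the $G_0$-equivariant operator on $(H\otimes R)\oplus(H^*\otimes R^* )$ given by \[\begin{pmatrix}\mathsf A\otimes\mathrm{Id}_R&\mathsf B\otimes\psi^{-1}\\ \mathsf K\otimes\psi&\mathsf D\otimes\mathrm{Id}_{R^*}\end{pmatrix}.\] Then $\Phi(M)$ respects $b$ if and only if $M$ respects - the symmetric form $s(h_1+f_1,h_2+f_2)=f_1(h_2)+f_2(h_1)$ when $\psi$ is symmetric, resp. - the alternating form $a(h_1+f_1,h_2+f_2)=f_1(h_2)-f_2(h_1)$ when $\psi$ is alternating.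
   Context: Setting: - $G_0$ is a compact group, and $R$ is a finite-dimensional irreducible unitary $G_0$-representation isomorphic to its dual $R^*$. - $V$ is a finite-dimensional unitary $G_0$-representation all of whose irreducible subrepresentations are isomorphic to $R$. Duals carry the action $g(f)=f\circ g^{-1}$. - $H=\mathrm{Hom}_{G_0}(R,V)$, $H^*=\mathrm{Hom}_{G_0}(R^*,V^* )$, paired by $f(h)=\sum_i f(\vartheta_i)(h(e_i))$, where $(e_i)$ is a basis of $R$ and $(\vartheta_i)$ is the dual basis. - $\varepsilon:(H\otimes R)\oplus(H^*\otimes R^* )\to V\oplus V^*$, $h\otimes r+f\otimes t\mapsto h(r)+f(t)$, is a $G_0$-equivariant isomorphism. - $b$ denotes the pullback via $\varepsilon$ of the symmetric form $b_0(v_1+f_1,v_2+f_2)=f_1(v_2)+f_2(v_1)$ on $V\oplus V^*$. A linear map $M$ respects a bilinear form $F$ either as an isometry, $F(Mw_1,Mw_2)=F(w_1,w_2)$ (for invertible $M$), or infinitesimally, $F(Mw_1,w_2)+F(w_1,Mw_2)=0$. The equivalence holds in each sense. *)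

From HB Require Import structures.
From mathcomp Require Import all_boot all_order all_algebra.
From mathcomp Require Import complex.
From mathcomp Require Import all_classical all_reals topology normedtype.
Import numFieldNormedType.Exports.
Set Implicit Arguments. Unset Strict Implicit. Unset Printing Implicit Defensive.
Import GRing.Theory Num.Theory.
Local Open Scope ring_scope.

Definition compact_group (G : topologicalType) (mul : G -> G -> G) (inv : G -> G)
  (one : G) : Prop :=
  [/\ (forall x y z, mul x (mul y z) = mul (mul x y) z),
      (forall x, mul one x = x),
      (forall x, mul (inv x) x = one),
      continuous (fun p : G * G => mul p.1 p.2) /\ continuous inv
    & compact [set: G] /\ hausdorff_space G].

Section Reps.
Variables (R : realType) (G : topologicalType) (mul : G -> G -> G)
  (inv : G -> G) (one : G).
Local Notation C := (R[i]).

(* A finite-dimensional continuous unitary representation on C^n (column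
   vectors, g.v = rho g *m v, standard Hermitian inner product). *)
Definition unitary_rep n (rho : G -> 'M[C]_n) : Prop :=
  [/\ rho one = 1%:M,
      (forall g h, rho (mul g h) = rho g *m rho h),
      (forall g, (map_mx Num.conj (rho g))^T *m rho g = 1%:M)
    & forall i j, continuous (fun g => complex.Re (rho g i j)) /\
                  continuous (fun g => complex.Im (rho g i j))].

(* Dual representation on dual of C^n = C^n (coordinates in the dual basis):
   g(f) = f o g^{-1}. *)
Definition dual_rep n (rho : G -> 'M[C]_n) : G -> 'M[C]_n :=
  fun g => (rho (inv g))^T.

Definition equivariant n1 n2 (rho1 : G -> 'M[C]_n1) (rho2 : G -> 'M[C]_n2)
  (X : 'M[C]_(n2, n1)) : Prop :=
  forall g, X *m rho1 g = rho2 g *m X.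

Definition isomorphic_reps n (rho1 rho2 : G -> 'M[C]_n) : Prop :=
  exists X : 'M[C]_n, X \in unitmx /\ equivariant rho1 rho2 X.

(* The subspace of C^n spanned by the (transposed) rows of U is invariant. *)
Definition invariant_subspace n (rho : G -> 'M[C]_n) (U : 'M[C]_n) : Prop :=
  forall g, (U *m (rho g)^T <= U)%MS.

Definition irreducible_rep n (rho : G -> 'M[C]_n) : Prop :=
  (0 < n)%N /\
  forall U, invariant_subspace rho U -> \rank U = 0%N \/ \rank U = n.

Definition irreducible_subrep n (rho : G -> 'M[C]_n) (U : 'M[C]_n) : Prop :=
  [/\ invariant_subspace rho U, (0 < \rank U)%N &
      forall W, invariant_subspace rho W -> (W <= U)%MS ->
        \rank W = 0%N \/ (U <= W)%MS].

Definition isotypic_of nR m (rhoR : G -> 'M[C]_nR) (rhoV : G -> 'M[C]_m) : Prop :=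
  forall U, irreducible_subrep rhoV U ->
    exists X : 'M[C]_(m, nR),
      [/\ equivariant rhoR rhoV X, \rank X = nR & (X^T == U)%MS].
End Reps.

Section Forms.
Variable (R : realType).
Local Notation C := (R[i]).

Definition is_basis p q (P : 'M[C]_(p, q) -> Prop) k (b : 'I_k -> 'M[C]_(p, q)) : Prop :=
  [/\ (forall a, P (b a)),
      (forall c : 'I_k -> C, \sum_a c a *: b a = 0 -> forall a, c a = 0)
    & (forall X, P X -> exists c : 'I_k -> C, X = \sum_a c a *: b a)].

(* Evaluation of a functional (coordinates in the dual basis) on a vector. *)
Definition ev n (f v : 'cV[C]_n) : C := \sum_(j < n) f j 0 * v j 0.

(* The pairing Hdual x H: f(h) = sum_i f(theta_i)(h(e_i)). *)
Definition pairing m nR (F X : 'M[C]_(m, nR)) : C :=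
  \sum_(i < nR) ev (F *m delta_mx i 0) (X *m delta_mx i 0).

Definition combo p q k (b : 'I_k -> 'M[C]_(p, q)) (x : 'cV[C]_k) : 'M[C]_(p, q) :=
  \sum_a x a 0 *: b a.

(* Forms s and a on H (+) Hdual, in coordinates w.r.t. bases hb of H, fb of Hdual. *)
Definition sform m nR k k' (hb : 'I_k -> 'M[C]_(m, nR)) (fb : 'I_k' -> 'M[C]_(m, nR))
  (w1 w2 : 'cV[C]_(k + k')) : C :=
  pairing (combo fb (dsubmx w1)) (combo hb (usubmx w2))
  + pairing (combo fb (dsubmx w2)) (combo hb (usubmx w1)).

Definition aform m nR k k' (hb : 'I_k -> 'M[C]_(m, nR)) (fb : 'I_k' -> 'M[C]_(m, nR))
  (w1 w2 : 'cV[C]_(k + k')) : C :=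
  pairing (combo fb (dsubmx w1)) (combo hb (usubmx w2))
  - pairing (combo fb (dsubmx w2)) (combo hb (usubmx w1)).

(* Tensor products: C^k2 (x) C^n2 is modelled by 'M_(k2, n2) (the entry (a,i)
   is the coordinate on b_a (x) e_i); the operator A (x) P acts as u |-> A u P^T. *)
Definition tens_act k1 k2 n1 n2 (A : 'M[C]_(k1, k2)) (P : 'M[C]_(n1, n2))
  (u : 'M[C]_(k2, n2)) : 'M[C]_(k1, n1) := A *m u *m P^T.

Definition Phi k k' nR (A : 'M[C]_k) (B : 'M[C]_(k, k')) (K : 'M[C]_(k', k))
  (D : 'M[C]_k') (Psi : 'M[C]_nR) (w : 'M[C]_(k, nR) * 'M[C]_(k', nR)) :
  'M[C]_(k, nR) * 'M[C]_(k', nR) :=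
  (tens_act A 1%:M w.1 + tens_act B (invmx Psi) w.2,
   tens_act K Psi w.1 + tens_act D 1%:M w.2).

(* epsilon : (H (x) R) (+) (Hdual (x) Rdual) -> V (+) Vdual,  h (x) r + f (x) t |-> h(r) + f(t). *)
Definition epsilon m nR k k' (hb : 'I_k -> 'M[C]_(m, nR)) (fb : 'I_k' -> 'M[C]_(m, nR))
  (w : 'M[C]_(k, nR) * 'M[C]_(k', nR)) : 'cV[C]_m * 'cV[C]_m :=
  (\sum_(a < k) \sum_(i < nR) w.1 a i *: (hb a *m delta_mx i 0),
   \sum_(c < k') \sum_(j < nR) w.2 c j *: (fb c *m delta_mx j 0)).

Definition b0 m (p1 p2 : 'cV[C]_m * 'cV[C]_m) : C := ev p1.2 p2.1 + ev p2.2 p1.1.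

Definition bform m nR k k' (hb : 'I_k -> 'M[C]_(m, nR)) (fb : 'I_k' -> 'M[C]_(m, nR))
  (w1 w2 : 'M[C]_(k, nR) * 'M[C]_(k', nR)) : C :=
  b0 (epsilon hb fb w1) (epsilon hb fb w2).

Definition psi_symmetric nR (Psi : 'M[C]_nR) : Prop :=
  forall r t : 'cV[C]_nR, ev (Psi *m r) t = ev (Psi *m t) r.
Definition psi_alternating nR (Psi : 'M[C]_nR) : Prop :=
  forall r t : 'cV[C]_nR, ev (Psi *m r) t = - ev (Psi *m t) r.
End Forms.

Definition respects_isom (T : Type) (K : zmodType) (F : T -> T -> K) (f : T -> T) : Prop :=
  forall w1 w2, F (f w1) (f w2) = F w1 w2.
Definition respects_inf (T : Type) (K : zmodType) (F : T -> T -> K) (f : T -> T) : Prop :=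
  forall w1 w2, F (f w1) w2 + F w1 (f w2) = 0.

(* By Schur's lemma every composite f^T h of f in H* and h in H is a scalar, so the
   pairing of H* with H is encoded by one Gram matrix L, and the forms s and a are
   nR x1^T S_e x2 with S_e = [[0, e L^T], [L, 0]] for e = 1, resp. e = -1.  If
   psi^T = e psi, then identifying the sum of H ⊗ R and H* ⊗ R* with the tensor product
   of H ⊕ H* and R through Id ⊕ (Id ⊗ psi^-1) turns Phi(M) into M ⊗ Id and b into
   tr (psi W1^T S_e W2).  Both forms determine S_e, so each is respected by M exactly
   when M^T S_e M = S_e, resp. M^T S_e + S_e M = 0. *)

From HB Require Import structures.
From mathcomp Require Import all_boot all_order all_algebra.
From mathcomp Require Import complex.
From mathcomp Require Import all_classical all_reals topology normedtype.
From mathcomp Require Import ring.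
Import GRing.Theory Num.Theory.
Local Open Scope ring_scope.

Set Implicit Arguments. Unset Strict Implicit. Unset Printing Implicit Defensive.

Section MatrixForms.
Variable F : fieldType.

Lemma delta_mulmx_delta n p q r (i : 'I_p) (a : 'I_n) (A : 'M[F]_(n, q))
    (b : 'I_q) (j : 'I_r) :
  delta_mx i a *m A *m delta_mx b j = A a b *: delta_mx i j.
Proof.
rewrite -(mul_delta_mx (0 : 'I_1)) -[delta_mx b j](mul_delta_mx (0 : 'I_1)).
rewrite !mulmxA -[_ *m delta_mx 0 a *m A]mulmxA -rowE -[_ *m row a A *m _]mulmxA.
rewrite -colE [col b (row a A)]mx11_scalar !mxE mul_mx_scalar -scalemxAl.
by rewrite mul_delta_mx.
Qed.

Lemma mxtrace_delta_mulmx n p (i : 'I_n) (j : 'I_p) (A : 'M[F]_(p, n)) :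
  \tr (delta_mx i j *m A) = A j i.
Proof.
by rewrite -(mul_delta_mx (0 : 'I_1)) -mulmxA mxtrace_mulC -rowE -colE trace_mx11 !mxE.
Qed.

Lemma mxtrace_mulmx_tr m n (A B : 'M[F]_(m, n)) :
  \tr (A *m B^T) = \sum_i \sum_j A i j * B i j.
Proof. by apply: eq_bigr => i _; rewrite mxE; apply: eq_bigr => j _; rewrite mxE. Qed.

Lemma unitmx_neq0 n (A : 'M[F]_n) : (0 < n)%N -> A \in unitmx -> A != 0.
Proof.
by case: n A => // n A _; apply: contraTneq => ->; rewrite unitmxE det0 unitr0.
Qed.

Definition mxform n p (P : 'M[F]_p) (S : 'M[F]_n) (x y : 'M[F]_(n, p)) : F :=
  \tr (P *m x^T *m S *m y).

Lemma mxform_scalar n c (S : 'M[F]_n) (x y : 'cV[F]_n) :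
  mxform c%:M S x y = c * (x^T *m S *m y) 0 0.
Proof. by rewrite /mxform mul_scalar_mx -!scalemxAl mxtraceZ trace_mx11. Qed.

Lemma mxformD n p (P : 'M[F]_p) (S1 S2 : 'M[F]_n) x y :
  mxform P (S1 + S2) x y = mxform P S1 x y + mxform P S2 x y.
Proof. by rewrite /mxform mulmxDr mulmxDl raddfD. Qed.

Lemma mxformB n p (P : 'M[F]_p) (S1 S2 : 'M[F]_n) x y :
  mxform P (S1 - S2) x y = mxform P S1 x y - mxform P S2 x y.
Proof. by rewrite /mxform mulmxBr mulmxBl raddfB. Qed.

Lemma mxform_mulmx n p (P : 'M[F]_p) (S M : 'M[F]_n) x y :
  mxform P S (M *m x) (M *m y) = mxform P (M^T *m S *m M) x y.
Proof. by rewrite /mxform trmx_mul !mulmxA. Qed.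

Lemma mxform_mulmxl n p (P : 'M[F]_p) (S M : 'M[F]_n) x y :
  mxform P S (M *m x) y = mxform P (M^T *m S) x y.
Proof. by rewrite /mxform trmx_mul !mulmxA. Qed.

Lemma mxform_mulmxr n p (P : 'M[F]_p) (S M : 'M[F]_n) x y :
  mxform P S x (M *m y) = mxform P (S *m M) x y.
Proof. by rewrite /mxform !mulmxA. Qed.

Lemma mxform_eq0 n p (P : 'M[F]_p) (S : 'M[F]_n) :
  P != 0 -> (forall x y, mxform P S x y = 0) -> S = 0.
Proof.
move=> P_neq0 S0; apply/matrixP => a b; rewrite mxE.
apply: contraTeq P_neq0 => Sab_neq0; rewrite negbK.
apply/eqP/matrixP => j i; rewrite mxE.
have := S0 (delta_mx a i) (delta_mx b j).
rewrite /mxform trmx_delta -!mulmxA (mulmxA (delta_mx i a)) delta_mulmx_delta.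
rewrite -scalemxAr mxtraceZ mxtrace_mulC mxtrace_delta_mulmx => /eqP.
by rewrite mulf_eq0 (negbTE Sab_neq0) => /eqP.
Qed.

Lemma mxform_inj n p (P : 'M[F]_p) (S1 S2 : 'M[F]_n) :
  P != 0 -> (forall x y, mxform P S1 x y = mxform P S2 x y) -> S1 = S2.
Proof.
move=> P_neq0 S12; apply/eqP; rewrite -subr_eq0; apply/eqP.
by apply: (mxform_eq0 P_neq0) => x y; rewrite mxformB S12 subrr.
Qed.

Section Transport.
Variables (n p : nat) (P : 'M[F]_p) (S M : 'M[F]_n).
Variables (T : Type) (form : T -> T -> F) (f : T -> T).
Variables (coord : T -> 'M[F]_(n, p)) (uncoord : 'M[F]_(n, p) -> T).
Hypotheses (P_neq0 : P != 0) (uncoordK : cancel uncoord coord).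
Hypothesis formE : forall w1 w2, form w1 w2 = mxform P S (coord w1) (coord w2).
Hypothesis coordf : forall w, coord (f w) = M *m coord w.

Lemma respects_isom_mxformE : respects_isom form f <-> M^T *m S *m M = S.
Proof.
split=> [fS | MS w1 w2]; last by rewrite !formE !coordf mxform_mulmx MS.
apply: (mxform_inj P_neq0) => x y.
by rewrite -mxform_mulmx -(uncoordK x) -(uncoordK y) -!coordf -formE fS formE.
Qed.

Lemma respects_inf_mxformE : respects_inf form f <-> M^T *m S + S *m M = 0.
Proof.
split=> [fS | MS w1 w2]; last first.
  rewrite !formE !coordf mxform_mulmxl mxform_mulmxr -mxformD MS.
  by rewrite /mxform mulmx0 mul0mx raddf0.
apply: (mxform_eq0 P_neq0) => x y.
rewrite mxformD -mxform_mulmxl -mxform_mulmxr -(uncoordK x) -(uncoordK y).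
by rewrite -!coordf -!formE fS.
Qed.
End Transport.

End MatrixForms.

Section PairingMatrix.
Variables (F : fieldType) (k k' nR : nat) (Psi : 'M[F]_nR).

Definition pairing_mx (L : 'M[F]_(k', k)) (e : F) : 'M[F]_(k + k') :=
  block_mx 0 (e *: L^T) L 0.

Lemma pairing_mxE L e (x y : 'cV[F]_(k + k')) :
  (x^T *m pairing_mx L e *m y) 0 0 =
  ((dsubmx x)^T *m L *m usubmx y) 0 0 + e * ((dsubmx y)^T *m L *m usubmx x) 0 0.
Proof.
rewrite -[in LHS](vsubmxK x) -[in LHS](vsubmxK y) tr_col_mx mul_row_block.
rewrite ?mulmx0 ?mul0mx ?add0r ?addr0 mul_row_col mxE; congr (_ + _).
rewrite -scalemxAr -scalemxAl mxE; congr (_ * _).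
suff -> : (usubmx x)^T *m L^T *m dsubmx y = ((dsubmx y)^T *m L *m usubmx x)^T.
  by rewrite mxE.
by rewrite !trmx_mul trmxK mulmxA.
Qed.

(* Id ⊕ (Id ⊗ psi^-1), in the tensor encoding of [tens_act]. *)
Definition untwist (w : 'M[F]_(k, nR) * 'M[F]_(k', nR)) : 'M[F]_(k + k', nR) :=
  col_mx w.1 (w.2 *m (invmx Psi)^T).

Definition retwist (W : 'M[F]_(k + k', nR)) : 'M[F]_(k, nR) * 'M[F]_(k', nR) :=
  (usubmx W, dsubmx W *m Psi^T).

Hypothesis Psi_unit : Psi \in unitmx.

Lemma retwistK : cancel retwist untwist.
Proof.
by move=> W; rewrite /untwist /= -mulmxA -trmx_mul mulVmx // trmx1 mulmx1 vsubmxK.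
Qed.

Lemma mxform_untwist L e : Psi^T = e *: Psi -> e * e = 1 -> forall w1 w2,
  mxform Psi (pairing_mx L e) (untwist w1) (untwist w2) =
  \tr (w1.2^T *m L *m w2.1) + \tr (w2.2^T *m L *m w1.1).
Proof.
move=> Psi_tr ee w1 w2.
have invPsi_tr : (invmx Psi)^T *m Psi = e%:M.
  have Psi_eq : Psi = e *: Psi^T by rewrite Psi_tr scalerA ee scale1r.
  by rewrite {2}Psi_eq -scalemxAr -trmx_mul mulmxV // trmx1 scalemx1.
rewrite /mxform /pairing_mx /untwist tr_col_mx -!mulmxA mul_block_col !mul0mx.
rewrite add0r addr0 mul_row_col mulmxDr mxtraceD trmx_mul trmxK addrC; congr (_ + _).
  by rewrite !mulmxA mulmxV // mul1mx.
rewrite -scalemxAl -!scalemxAr mxtraceZ mxtrace_mulC -!mulmxA invPsi_tr.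
rewrite mul_mx_scalar -!scalemxAr mxtraceZ mulrA ee mul1r -[LHS]mxtrace_tr.
by rewrite !trmx_mul !trmxK !mulmxA.
Qed.
End PairingMatrix.

Section Representations.
Variables (R : realType) (G : topologicalType).
Local Notation C := (R[i]).

Lemma compact_group_invK (mul : G -> G -> G) (inv : G -> G) (one : G) :
  compact_group mul inv one -> involutive inv.
Proof.
case=> mulA mul1g mulVg _ _.
have mulgV x : mul x (inv x) = one.
  rewrite -[mul x _]mul1g -(mulVg (inv x)) -mulA (mulA (inv x)) mulVg mul1g.
  by rewrite mulVg.
have mulg1 x : mul x one = x by rewrite -(mulVg x) mulA mulgV mul1g.
by move=> g; rewrite -[inv (inv g)]mulg1 -(mulVg g) mulA mulVg mul1g.
Qed.

Lemma equivariant_mulmx n1 n2 n3 (rho1 : G -> 'M[C]_n1) (rho2 : G -> 'M[C]_n2)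
    (rho3 : G -> 'M[C]_n3) X Y :
  equivariant rho1 rho2 X -> equivariant rho2 rho3 Y ->
  equivariant rho1 rho3 (Y *m X).
Proof. by move=> eX eY g; rewrite -mulmxA eX !mulmxA eY. Qed.

Lemma dual_equivariant_tr (inv : G -> G) n1 n2 (rho1 : G -> 'M[C]_n1)
    (rho2 : G -> 'M[C]_n2) X :
  involutive inv -> equivariant (dual_rep inv rho1) (dual_rep inv rho2) X ->
  equivariant rho2 rho1 X^T.
Proof.
move=> invK eX g; have := eX (inv g); rewrite /dual_rep invK => /(congr1 trmx).
by rewrite !trmx_mul !trmxK.
Qed.

Lemma irreducible_equivariant_scalar n (rho : G -> 'M[C]_n) X :
  irreducible_rep rho -> equivariant rho rho X -> exists a, X = a%:M.
Proof.
case=> n_gt0 irr eX.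
have : size (char_poly X^T) != 1%N by rewrite size_char_poly; case: (n) n_gt0.
case/closed_rootP=> a; rewrite -eigenvalue_root_char /eigenvalue /eigenspace.
set U := kermx _ => U_neq0.
have U_inv : invariant_subspace rho U.
  move=> g; rewrite sub_kermx -mulmxA.
  have -> : (rho g)^T *m (X^T - a%:M) = (X^T - a%:M) *m (rho g)^T.
    by rewrite -tr_scalar_mx -linearB -!trmx_mul mulmxBl mulmxBr eX scalar_mxC.
  by rewrite mulmxA mulmx_ker mul0mx.
exists a; case: (irr U U_inv) => [/eqP | rkU].
  by rewrite mxrank_eq0 (negbTE U_neq0).
have : (1%:M <= U)%MS by apply: submx_full; rewrite /row_full rkU.
rewrite sub_kermx mul1mx subr_eq0 => /eqP XT.
by rewrite -(trmxK X) XT tr_scalar_mx.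
Qed.
End Representations.

Section Coordinates.
Variable R : realType.
Local Notation C := (R[i]).

Lemma ev_mx n (f v : 'cV[C]_n) : ev f v = (f^T *m v) 0 0.
Proof. by rewrite /ev !mxE; apply: eq_bigr => j _; rewrite !mxE. Qed.

Lemma pairing_mxtrace m nR (F X : 'M[C]_(m, nR)) : pairing F X = \tr (F^T *m X).
Proof.
apply: eq_bigr => i _.
by rewrite ev_mx trmx_mul trmx_delta !mulmxA -rowE -row_mul -colE !mxE.
Qed.

Lemma sum_mulmx_delta p n (X : 'M[C]_(p, n)) (u : 'rV[C]_n) :
  \sum_i u 0 i *: (X *m delta_mx i 0) = X *m u^T.
Proof.
rewrite [u in RHS]row_sum_delta raddf_sum /= mulmx_sumr.
by apply: eq_bigr => i _; rewrite linearZ /= trmx_delta scalemxAr.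
Qed.

Lemma epsilonE m nR k k' (hb : 'I_k -> 'M[C]_(m, nR)) (fb : 'I_k' -> 'M[C]_(m, nR))
    w :
  epsilon hb fb w =
  (\sum_a hb a *m (row a w.1)^T, \sum_c fb c *m (row c w.2)^T).
Proof.
by congr pair; apply: eq_bigr => a _; rewrite -sum_mulmx_delta;
  apply: eq_bigr => i _; rewrite mxE.
Qed.

Lemma ev_delta n (Psi : 'M[C]_n) i j : ev (Psi *m delta_mx j 0) (delta_mx i 0) = Psi i j.
Proof. by rewrite ev_mx trmx_mul trmx_delta -rowE -colE !mxE. Qed.

Lemma psi_symmetric_tr n (Psi : 'M[C]_n) : psi_symmetric Psi -> Psi^T = 1 *: Psi.
Proof.
move=> Psi_sym; rewrite scale1r; apply/matrixP => i j.
by rewrite mxE -!ev_delta Psi_sym.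
Qed.

Lemma psi_alternating_tr n (Psi : 'M[C]_n) : psi_alternating Psi -> Psi^T = -1 *: Psi.
Proof.
move=> Psi_alt; rewrite scaleN1r; apply/matrixP => i j.
by rewrite !mxE -!ev_delta Psi_alt.
Qed.

Lemma untwist_Phi k k' nR (Psi : 'M[C]_nR) (A : 'M[C]_k) (B : 'M[C]_(k, k'))
    (K : 'M[C]_(k', k)) (D : 'M[C]_k') w : Psi \in unitmx ->
  untwist Psi (Phi A B K D Psi w) = block_mx A B K D *m untwist Psi w.
Proof.
move=> Psi_unit; rewrite /untwist /Phi /tens_act /= mul_block_col !trmx1 !mulmx1.
by rewrite mulmxDl -!mulmxA -trmx_mul mulVmx // trmx1 mulmx1.
Qed.
End Coordinates.

Section GramMatrix.
Variables (R : realType) (G : topologicalType) (inv : G -> G).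
Local Notation C := (R[i]).
Variables (nR m k k' : nat) (rhoR : G -> 'M[C]_nR) (rhoV : G -> 'M[C]_m).
Variables (hb : 'I_k -> 'M[C]_(m, nR)) (fb : 'I_k' -> 'M[C]_(m, nR)).
Hypotheses (invK : involutive inv) (irrR : irreducible_rep rhoR).
Hypothesis hb_equiv : forall a, equivariant rhoR rhoV (hb a).
Hypothesis fb_equiv :
  forall c, equivariant (dual_rep inv rhoR) (dual_rep inv rhoV) (fb c).

Definition gram_mx : 'M[C]_(k', k) :=
  \matrix_(c, a) (\tr ((fb c)^T *m hb a) / nR%:R).

Lemma nR_neq0 : nR%:R != 0 :> C.
Proof. by rewrite pnatr_eq0 -lt0n; case: irrR. Qed.

Lemma gram_scalar c a : (fb c)^T *m hb a = (gram_mx c a)%:M.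
Proof.
have [x xE] := irreducible_equivariant_scalar irrR
  (equivariant_mulmx (hb_equiv a) (dual_equivariant_tr invK (fb_equiv c))).
by rewrite xE mxE xE mxtrace_scalar -[x *+ nR]mulr_natr mulfK // nR_neq0.
Qed.

Lemma ev_epsilon w w' :
  ev (epsilon hb fb w).2 (epsilon hb fb w').1 = \tr (w.2^T *m gram_mx *m w'.1).
Proof.
rewrite !epsilonE ev_mx /= [X in X *m _]raddf_sum /= mulmx_suml summxE.
rewrite -mulmxA mxtrace_mulC -mulmxA -[w'.1 *m _]trmxK trmx_mul trmxK.
rewrite mxtrace_mulmx_tr; apply: eq_bigr => c _.
rewrite trmx_mul trmxK mulmx_sumr summxE; apply: eq_bigr => a _.
rewrite mulmxA -(mulmxA _ (fb c)^T) gram_scalar mul_mx_scalar -scalemxAl mxE.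
by congr (_ * _); rewrite !mxE; apply: eq_bigr => i _; rewrite !mxE.
Qed.

Lemma bform_mxtrace w1 w2 : bform hb fb w1 w2 =
  \tr (w1.2^T *m gram_mx *m w2.1) + \tr (w2.2^T *m gram_mx *m w1.1).
Proof. by rewrite /bform /b0 !ev_epsilon. Qed.

Lemma pairing_combo d u :
  pairing (combo fb d) (combo hb u) = nR%:R * (d^T *m gram_mx *m u) 0 0.
Proof.
rewrite pairing_mxtrace /combo [X in X *m _]raddf_sum /= mulmx_suml raddf_sum /=.
rewrite -trace_mx11 -mulmxA mxtrace_mulC -mulmxA -[u *m _]trmxK trmx_mul trmxK.
rewrite mxtrace_mulmx_tr mulr_sumr; apply: eq_bigr => c _.
rewrite linearZ /= mulmx_sumr raddf_sum /= mulr_sumr; apply: eq_bigr => a _.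
rewrite -scalemxAl -scalemxAr gram_scalar !mxtraceZ mxtrace_scalar.
set g := gram_mx c a; rewrite !mxE big_ord1 !mxE -[g *+ nR]mulr_natr.
ring.
Qed.

Lemma sform_mxform x y :
  sform hb fb x y = mxform (nR%:R)%:M (pairing_mx gram_mx 1) x y.
Proof. by rewrite /sform mxform_scalar pairing_mxE !pairing_combo mul1r mulrDr. Qed.

Lemma aform_mxform x y :
  aform hb fb x y = mxform (nR%:R)%:M (pairing_mx gram_mx (-1)) x y.
Proof.
by rewrite /aform mxform_scalar pairing_mxE !pairing_combo mulN1r mulrDr mulrN.
Qed.

Variable Psi : 'M[C]_nR.
Hypothesis Psi_unit : Psi \in unitmx.

Lemma Phi_respects_iff e (form : 'cV[C]_(k + k') -> 'cV[C]_(k + k') -> C)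
    A B K D (M := block_mx A B K D) :
  Psi^T = e *: Psi -> e * e = 1 ->
  (forall x y, form x y = mxform (nR%:R)%:M (pairing_mx gram_mx e) x y) ->
  (respects_isom (bform hb fb) (Phi A B K D Psi) <-> respects_isom form (mulmx M)) /\
  (respects_inf (bform hb fb) (Phi A B K D Psi) <-> respects_inf form (mulmx M)).
Proof.
move=> Psi_tr ee formE.
have Psi_neq0 : Psi != 0 by apply: unitmx_neq0 Psi_unit; case: irrR.
have nR_mx_neq0 : (nR%:R)%:M != 0 :> 'M[C]_1.
  by apply: contraNneq nR_neq0 => /matrixP/(_ 0 0); rewrite !mxE mulr1n => ->.
have bformE w1 w2 : bform hb fb w1 w2 =
    mxform Psi (pairing_mx gram_mx e) (untwist Psi w1) (untwist Psi w2).
  by rewrite bform_mxtrace mxform_untwist.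
have untwistM w : untwist Psi (Phi A B K D Psi w) = M *m untwist Psi w.
  exact: untwist_Phi.
split.
- rewrite (respects_isom_mxformE Psi_neq0 (retwistK Psi_unit) bformE untwistM).
  by rewrite (respects_isom_mxformE (coord := id) (uncoord := id) nR_mx_neq0
    (frefl _) formE (frefl _)).
- rewrite (respects_inf_mxformE Psi_neq0 (retwistK Psi_unit) bformE untwistM).
  by rewrite (respects_inf_mxformE (coord := id) (uncoord := id) nR_mx_neq0
    (frefl _) formE (frefl _)).
Qed.
End GramMatrix.

Theorem proposition3p13 (R : realType) (G : topologicalType)
  (mul : G -> G -> G) (inv : G -> G) (one : G)
  (hG : compact_group mul inv one)
  (nR : nat) (rhoR : G -> 'M[R[i]]_nR)
  (hR : unitary_rep mul one rhoR) (irrR : irreducible_rep rhoR)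
  (selfdual : isomorphic_reps rhoR (dual_rep inv rhoR))
  (m : nat) (rhoV : G -> 'M[R[i]]_m)
  (hV : unitary_rep mul one rhoV) (isoV : isotypic_of rhoR rhoV)
  (k : nat) (hb : 'I_k -> 'M[R[i]]_(m, nR))
  (hHb : is_basis (equivariant rhoR rhoV) hb)
  (k' : nat) (fb : 'I_k' -> 'M[R[i]]_(m, nR))
  (hHsb : is_basis (equivariant (dual_rep inv rhoR) (dual_rep inv rhoV)) fb)
  (Psi : 'M[R[i]]_nR)
  (hPsi : equivariant rhoR (dual_rep inv rhoR) Psi) (uPsi : Psi \in unitmx) :
  (psi_symmetric Psi ->
   forall (A : 'M[R[i]]_k) (B : 'M[R[i]]_(k, k')) (K : 'M[R[i]]_(k', k))
          (D : 'M[R[i]]_k'),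
     (block_mx A B K D \in unitmx ->
        (respects_isom (bform hb fb) (Phi A B K D Psi) <->
         respects_isom (sform hb fb) (mulmx (block_mx A B K D)))) /\
     (respects_inf (bform hb fb) (Phi A B K D Psi) <->
      respects_inf (sform hb fb) (mulmx (block_mx A B K D)))) /\
  (psi_alternating Psi ->
   forall (A : 'M[R[i]]_k) (B : 'M[R[i]]_(k, k')) (K : 'M[R[i]]_(k', k))
          (D : 'M[R[i]]_k'),
     (block_mx A B K D \in unitmx ->
        (respects_isom (bform hb fb) (Phi A B K D Psi) <->
         respects_isom (aform hb fb) (mulmx (block_mx A B K D)))) /\
     (respects_inf (bform hb fb) (Phi A B K D Psi) <->
      respects_inf (aform hb fb) (mulmx (block_mx A B K D)))).
Proof.
have invK := compact_group_invK hG.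
case: hHb => hb_equiv _ _; case: hHsb => fb_equiv _ _.
have Phi_iff := Phi_respects_iff invK irrR hb_equiv fb_equiv uPsi.
split=> [/psi_symmetric_tr | /psi_alternating_tr] Psi_tr A B K D.
- have symE := sform_mxform invK irrR hb_equiv fb_equiv.
  by have [] := Phi_iff _ _ A B K D Psi_tr (mulr1 1) symE; split.
- have altE := aform_mxform invK irrR hb_equiv fb_equiv.
  have sign2 : (-1 : R[i]) * -1 = 1 by rewrite mulrNN mulr1.
  by have [] := Phi_iff _ _ A B K D Psi_tr sign2 altE; split.
Qed.
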